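(* Let $q\ge1$, $N=2^q$, and let $B^{(1)}=(b_{i,j})_{i,j=1}^{N-1}$ be the symmetric Toeplitz matrix with $b_{i,i}=\frac{2N}3-1$, $b_{i,j}=\frac N6-1$ if $|i-j|=1$, and $b_{i,j}=-1$ if $|i-j|\ge2$. For $k=2,\dots,q$ define $B^{(k)}=R_kB^{(k-1)}R_k^T$, where $R_k:\mathbb R^{N/2^{k-2}-1}\to\mathbb R^{N/2^{k-1}-1}$ is $(R_k\nu)_i=\nu_{2i-1}+2\nu_{2i}+\nu_{2i+1}$. Let $L_{N/2^{k-1}-1}=\mathrm{tridiag}(-1,2,-1)$ be the one-dimensional discrete Laplacian of size $(N/2^{k-1}-1)\times(N/2^{k-1}-1)$. Then for every $1\le k\le q$ the matrix $$H^{(k)}:=B^{(k)}-\frac{2^{3k-5}}{3}N\,L_{N/2^{k-1}-1}$$ is positive semi-definite. *)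

From HB Require Import structures.
From mathcomp Require Import all_boot all_order all_algebra.
From mathcomp Require Import reals.
Set Implicit Arguments. Unset Strict Implicit. Unset Printing Implicit Defensive.
Import Order.TTheory GRing.Theory Num.Theory.
Local Open Scope ring_scope.

(* All matrix indices are 0-based (paper's index i corresponds to i-1 here). *)

Definition psd (R : realType) (n : nat) (A : 'M[R]_n) : Prop :=
  A^T = A /\ forall v : 'cV[R]_n, 0 <= (v^T *m A *m v) ord0 ord0.

Definition Bone (R : realType) (N n : nat) : 'M[R]_n :=
  \matrix_(i < n, j < n)
    (if (i : nat) == j then 2 * N%:R / 3 - 1
     else if ((i : nat) == j.+1) || ((j : nat) == i.+1) then N%:R / 6 - 1
     else -1).

(* Restriction R_k : R^n -> R^m, (R v)_i = v_{2i-1} + 2 v_{2i} + v_{2i+1}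
   (1-based), i.e. with 0-based indices (R v)_i = v_{2i} + 2 v_{2i+1} + v_{2i+2}. *)
Definition restr (R : realType) (m n : nat) : 'M[R]_(m, n) :=
  \matrix_(i < m, j < n)
    (if (j : nat) == i.*2 then 1
     else if (j : nat) == i.*2.+1 then 2
     else if (j : nat) == i.*2.+2 then 1
     else 0).

Definition lap1 (R : realType) (n : nat) : 'M[R]_n :=
  \matrix_(i < n, j < n)
    (if (i : nat) == j then 2
     else if ((i : nat) == j.+1) || ((j : nat) == i.+1) then -1
     else 0).

Definition dimB (N j : nat) : nat := N %/ 2 ^ j - 1.

(* Bmat N j = B^(j+1) (shifted index so that B^(1) is the base case). *)
Fixpoint Bmat (R : realType) (N j : nat) : 'M[R]_(dimB N j) :=
  match j with
  | 0 => Bone R N (dimB N 0)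
  | j'.+1 => restr R (dimB N j'.+1) (dimB N j') *m Bmat R N j'
               *m (restr R (dimB N j'.+1) (dimB N j'))^T
  end.

Definition Hmat (R : realType) (N k : nat) : 'M[R]_(dimB N k.-1) :=
  Bmat R N k.-1 -
  (((2 : R) ^ ((3 * k)%:Z - 5)) / 3 * N%:R) *: lap1 R (dimB N k.-1).

(* B^(k) stays a three-parameter symmetric Toeplitz matrix (diagonal p, first
   off-diagonal r, constant s further out): for odd size 2c+1, R_k maps
   (p, r, s) to (6p + 8r + 2s, p + 4r + 11s, 16s), so B^(j+1) has parameters
   8^j (2N/3, N/6, 0) - 16^j (1, 1, 1).  Subtracting the Laplacian term leaves
   H^(j+1) = a T - b J, where T = tridiag(1, 2, 1), J is the all-ones matrix,
   b = 16^j and 4a = (n+1) b for the size n = N/2^j - 1.  Now T = P^T P with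
   (P v)_i = v_(i-1) + v_i for 0 <= i <= n (v zero-padded), and the entries of
   P v add up to 2 (sum v); Cauchy-Schwarz on these n+1 entries gives
   4 (sum v)^2 <= (n+1) |P v|^2, i.e. v^T (a T - b J) v >= 0. *)

From HB Require Import structures.
From mathcomp Require Import all_boot all_order all_algebra.
From mathcomp Require Import reals.
From mathcomp Require Import zify ring lra.
Import Order.TTheory GRing.Theory Num.Theory.
Local Open Scope ring_scope.
Set Implicit Arguments. Unset Strict Implicit.

Ltac case_ifs := repeat (case: ifP => ?; try (exfalso; lia)).

Section Toeplitz.
Variable R : realType.

Definition toeplitz3_coef (p r s : R) (i j : nat) : R :=
  if i == j then p else if (i == j.+1) || (j == i.+1) then r else s.

Definition toeplitz3 n (p r s : R) : 'M[R]_n :=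
  \matrix_(i < n, j < n) toeplitz3_coef p r s i j.

Lemma Bone_toeplitz3 N n :
  Bone R N n = toeplitz3 n (2 * N%:R / 3 - 1) (N%:R / 6 - 1) (-1).
Proof. by []. Qed.

Lemma lap1_toeplitz3 n : lap1 R n = toeplitz3 n 2 (-1) 0.
Proof. by []. Qed.

Lemma tr_toeplitz3 n (p r s : R) : (toeplitz3 n p r s)^T = toeplitz3 n p r s.
Proof. by apply/matrixP => i j; rewrite !mxE /toeplitz3_coef; case_ifs. Qed.

Lemma toeplitz3B n (p r s p' r' s' : R) :
  toeplitz3 n p r s - toeplitz3 n p' r' s' = toeplitz3 n (p - p') (r - r') (s - s').
Proof. by apply/matrixP => i j; rewrite !mxE /toeplitz3_coef; case_ifs. Qed.

Lemma toeplitz3Z n (c p r s : R) :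
  c *: toeplitz3 n p r s = toeplitz3 n (c * p) (c * r) (c * s).
Proof. by apply/matrixP => i j; rewrite !mxE /toeplitz3_coef; case_ifs. Qed.

Lemma sum_delta m k (F : nat -> R) :
  \sum_(i < m) (if (i : nat) == k then F i else 0) = if (k < m)%N then F k else 0.
Proof. by rewrite -big_mkcond big_ord1_eq. Qed.

Lemma sum_restr c f (a : 'I_c) (F : nat -> R) : f = c.*2.+1 ->
  \sum_(x < f) restr R c f a x * F x = F a.*2 + 2 * F a.*2.+1 + F a.*2.+2.
Proof.
move=> def_f; have lt_a := ltn_ord a.
transitivity (\sum_(x < f) ((if (x : nat) == a.*2 then F x else 0)
  + (if (x : nat) == a.*2.+1 then 2 * F x else 0)
  + (if (x : nat) == a.*2.+2 then F x else 0))).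
  by apply: eq_bigr => x _; rewrite mxE; case_ifs; ring.
by rewrite !big_split /= !sum_delta (sum_delta _ _ (fun x => 2 * F x)); case_ifs.
Qed.

Lemma restr_toeplitz3 c f (p r s : R) : f = c.*2.+1 ->
  restr R c f *m toeplitz3 f p r s *m (restr R c f)^T =
  toeplitz3 c (6 * p + 8 * r + 2 * s) (p + 4 * r + 11 * s) (16 * s).
Proof.
move=> def_f; apply/matrixP => a b; set t := toeplitz3_coef p r s.
have row_a j : \sum_(i < f) restr R c f a i * toeplitz3 f p r s i j =
    t a.*2 j + 2 * t a.*2.+1 j + t a.*2.+2 j.
  by rewrite -(sum_restr a (fun i => t i j) def_f); apply: eq_bigr => i _; rewrite !mxE.
rewrite mxE; under eq_bigr => j _ do rewrite [(_ *m _) _ _]mxE row_a [_^T _ _]mxE mulrC.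
rewrite (sum_restr b (fun j => t a.*2 j + 2 * t a.*2.+1 j + t a.*2.+2 j) def_f).
by rewrite mxE /t /toeplitz3_coef; case_ifs; ring.
Qed.

Lemma sqr_sum_le m (x : 'I_m -> R) :
  (\sum_i x i) ^+ 2 <= m%:R * \sum_i x i ^+ 2.
Proof.
set S := \sum_i x i; set Q := \sum_i x i ^+ 2.
have row_sum i : \sum_j (x i - x j) ^+ 2 = m%:R * x i ^+ 2 - 2 * x i * S + Q.
  rewrite (eq_bigr (fun j => x i ^+ 2 + (- (2 * x i) * x j + x j ^+ 2))) => [|j _]; last by ring.
  by rewrite !big_split /= sumr_const card_ord -mulr_sumr -[_ *+ m]mulr_natr /S /Q; ring.
have : 0 <= \sum_i \sum_j (x i - x j) ^+ 2.
  by apply: sumr_ge0 => i _; apply: sumr_ge0 => j _; apply: sqr_ge0.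
rewrite (eq_bigr (fun i => m%:R * x i ^+ 2 + (- (2 * S) * x i + Q))) => [|i _]; last first.
  by rewrite row_sum; ring.
by rewrite !big_split /= sumr_const card_ord -!mulr_sumr -[Q *+ m]mulr_natr /S /Q; nra.
Qed.

Definition pairsum_mx n : 'M[R]_(n.+1, n) :=
  \matrix_(i, j) ((if (i : nat) == j then 1 else 0) + (if (i : nat) == j.+1 then 1 else 0)).

Lemma pairsum_gram n : (pairsum_mx n)^T *m pairsum_mx n = toeplitz3 n 2 1 0.
Proof.
apply/matrixP => a b; rewrite !mxE; have lt_a := ltn_ord a.
set e := fun i j : nat => (if i == j then 1 else 0) + (if i == j.+1 then 1 else 0) : R.
transitivity (\sum_(i < n.+1) ((if (i : nat) == a then e i b else 0)
                              + (if (i : nat) == a.+1 then e i b else 0))).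
  by apply: eq_bigr => i _; rewrite !mxE /e; case_ifs; ring.
by rewrite big_split /= !(sum_delta _ _ (e^~ b)) /e /toeplitz3_coef; case_ifs; ring.
Qed.

Lemma ones_mul_pairsum n : const_mx 1 *m pairsum_mx n = 2 *: const_mx 1 :> 'rV[R]_n.
Proof.
apply/matrixP => i0 j; rewrite !mxE; have lt_j := ltn_ord j.
transitivity (\sum_(i < n.+1) ((if (i : nat) == j then 1 else 0)
                              + (if (i : nat) == j.+1 then 1 else 0)) : R).
  by apply: eq_bigr => i _; rewrite !mxE mul1r.
by rewrite big_split /= !(sum_delta _ _ (fun=> 1)); case_ifs; ring.
Qed.

Lemma ones_gram n : (const_mx 1 : 'rV[R]_n)^T *m const_mx 1 = toeplitz3 n 1 1 1.
Proof.
by apply/matrixP => i j; rewrite !mxE big_ord1 !mxE /toeplitz3_coef mulr1; case_ifs.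
Qed.

Lemma toeplitz3_gram n (a b : R) :
  toeplitz3 n (2 * a - b) (a - b) (- b) =
  a *: ((pairsum_mx n)^T *m pairsum_mx n) - b *: ((const_mx 1 : 'rV_n)^T *m const_mx 1).
Proof. by rewrite pairsum_gram ones_gram !toeplitz3Z toeplitz3B; congr toeplitz3; ring. Qed.

Lemma gram_quad_form m n (M : 'M[R]_(m, n)) (v : 'cV_n) :
  (v^T *m (M^T *m M) *m v) 0 0 = \sum_i (M *m v) i 0 ^+ 2.
Proof.
rewrite mulmxA -trmx_mul -mulmxA mxE.
by apply: eq_bigr => i _; rewrite mxE expr2.
Qed.

Lemma toeplitz3_psd n (a b : R) : 0 <= b -> n.+1%:R * b <= 4 * a ->
  psd (toeplitz3 n (2 * a - b) (a - b) (- b)).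
Proof.
move=> b_ge0 le_b_a; split; first exact: tr_toeplitz3.
move=> v; set w := pairsum_mx n *m v; set s := ((const_mx 1 : 'rV_n) *m v) 0 0.
set Q := \sum_i w i 0 ^+ 2.
have -> : (v^T *m toeplitz3 n (2 * a - b) (a - b) (- b) *m v) 0 0 = a * Q - b * s ^+ 2.
  rewrite toeplitz3_gram mulmxBr mulmxBl -!scalemxAr -!scalemxAl -trace_mx11.
  by rewrite linearB !linearZ /= !trace_mx11 !gram_quad_form big_ord1.
have sum_w : \sum_i w i 0 = 2 * s.
  have := congr1 (fun u : 'rV_n => (u *m v) 0 0) (ones_mul_pairsum n).
  rewrite /= -mulmxA -scalemxAl mxE -/w -/s mxE => <-.
  by apply: eq_bigr => i _; rewrite [const_mx _ _ _]mxE mul1r.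
have cs := sqr_sum_le (fun i : 'I_n.+1 => w i 0); rewrite sum_w -/Q in cs.
have Q_ge0 : 0 <= Q by apply: sumr_ge0 => i _; apply: sqr_ge0.
have : 0 <= (4 * a - n.+1%:R * b) * Q by apply: mulr_ge0; lra.
nra.
Qed.

Lemma dimB_pow2 q j : (j <= q)%N -> dimB (2 ^ q) j = (2 ^ (q - j)).-1.
Proof. by move=> le_jq; rewrite /dimB -(subnK le_jq) expnD mulnK ?expn_gt0 // addnK subn1. Qed.

Lemma dimB_succ q j : (j < q)%N -> dimB (2 ^ q) j = (dimB (2 ^ q) j.+1).*2.+1.
Proof.
move=> lt_jq; rewrite !dimB_pow2 ?(ltnW lt_jq) // -(subnSK lt_jq) expnS.
by have := expn_gt0 2 (q - j.+1); lia.
Qed.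

Lemma Bmat_toeplitz3 q j : (j <= q)%N ->
  Bmat R (2 ^ q) j =
  toeplitz3 (dimB (2 ^ q) j) (8 ^+ j * (2 * (2 ^ q)%:R / 3) - 16 ^+ j)
    (8 ^+ j * ((2 ^ q)%:R / 6) - 16 ^+ j) (- 16 ^+ j).
Proof.
elim: j => [_|j IH lt_jq] /=; first by rewrite Bone_toeplitz3; congr toeplitz3; ring.
rewrite IH; last exact: ltnW.
rewrite restr_toeplitz3; last exact: dimB_succ.
by congr toeplitz3; rewrite !exprS; field.
Qed.

Lemma Hmat_coef j : (2 : R) ^ ((3 * j.+1)%:Z - 5) = 8 ^+ j / 4.
Proof.
have -> : ((3 * j.+1)%:Z - 5 = (3 * j)%:Z + (- 2%:Z))%R by lia.
rewrite exprzDr ?unitfE ?pnatr_eq0 // -exprnP -exprnN exprM.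
by congr (_ ^+ _ * _^-1); rewrite !exprS expr0; ring.
Qed.

End Toeplitz.

Theorem lemma4p7 (R : realType) (q k : nat) :
  (1 <= q)%N -> (1 <= k <= q)%N -> psd (Hmat R (2 ^ q) k).
Proof.
move=> _ /andP[]; case: k => // j _ lt_jq; have le_jq := ltnW lt_jq.
rewrite /Hmat /= (Bmat_toeplitz3 R le_jq) Hmat_coef lap1_toeplitz3 toeplitz3Z toeplitz3B.
set N : R := (2 ^ q)%:R; set b : R := 16 ^+ j; set a : R := 8 ^+ j * N / 4.
rewrite (_ : toeplitz3 _ _ _ _ = toeplitz3 (dimB (2 ^ q) j) (2 * a - b) (a - b) (- b)); last first.
  by congr toeplitz3; rewrite /a; field.
apply: toeplitz3_psd; first exact: exprn_ge0.
rewrite dimB_pow2 // prednK ?expn_gt0 //.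
suff -> : 4 * a = (2 ^ (q - j))%:R * b by [].
have -> : b = 8 ^+ j * 2 ^+ j by rewrite -exprMn -natrM.
by rewrite /a /N -{1}(subnK le_jq) expnD natrM !natrX; field.
Qed.
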